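(* For all $n\ge 0$, $|F_n(321,2143,3124)|=\binom{n}{2}+1$.
   Context: A permutation $\pi$ avoids a classical pattern $p\in S_k$ if no subsequence of $\pi$ of length $k$ is order-isomorphic to $p$. A Fishburn permutation is a permutation $\pi=\pi_1\cdots\pi_n$ of $[n]$ for which there are no indices $i<j$ with $\pi_j<\pi_i<\pi_{i+1}$ and $\pi_i=\pi_j+1$. $F_n(\sigma_1,\dots,\sigma_k)$ denotes the set of Fishburn permutations of length $n$ avoiding each of the classical patterns $\sigma_1,\dots,\sigma_k$ (with $F_0$ containing only the empty permutation). *)

From mathcomp Require Import all_boot all_fingroup.
Set Implicit Arguments. Unset Strict Implicit. Unset Printing Implicit Defensive.

(* Permutations of [n] are represented by 'S_n (permutations of 'I_n = {0..n-1});
   pi_i (1-based) corresponds to s (i-1) (0-based), values shifted by 1, which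
   preserves all order relations and the relation "pi_i = pi_j + 1". *)

Definition contains_pattern (n k : nat) (s : 'S_n) (p : 'S_k) : bool :=
  [exists f : {ffun 'I_k -> 'I_n},
     [forall a : 'I_k, forall b : 'I_k,
        ((a < b)%N ==> (f a < f b)%N) &&
        ((s (f a) < s (f b))%N == (p a < p b)%N)]].

Definition avoids (n k : nat) (s : 'S_n) (p : 'S_k) : bool :=
  ~~ contains_pattern s p.

Definition fishburn (n : nat) (s : 'S_n) : bool :=
  [forall i : 'I_n, forall j : 'I_n, forall i1 : 'I_n,
     ~~ [&& (i < j)%N, (val i1 == (val i).+1),
            (s j < s i)%N, (s i < s i1)%N & (val (s i) == (val (s j)).+1)]].

Definition pat321 : 'S_3 := perm (@rev_ord_inj 3).

Definition perm_of_seq (k : nat) (l : seq nat) : 'I_k.+1 -> 'I_k.+1 :=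
  fun i => inord (nth 0 l i).

Lemma pat2143_inj : injective (@perm_of_seq 3 [:: 1; 0; 3; 2]).
Proof.
move=> [[|[|[|[|i]]]] Hi] [[|[|[|[|j]]]] Hj] //= /(congr1 val);
  rewrite /perm_of_seq /= ?inordK //= => E; by apply: val_inj.
Qed.
Lemma pat3124_inj : injective (@perm_of_seq 3 [:: 2; 0; 1; 3]).
Proof.
move=> [[|[|[|[|i]]]] Hi] [[|[|[|[|j]]]] Hj] //= /(congr1 val);
  rewrite /perm_of_seq /= ?inordK //= => E; by apply: val_inj.
Qed.

Definition pat2143 : 'S_4 := perm pat2143_inj.
Definition pat3124 : 'S_4 := perm pat3124_inj.

Definition F_321_2143_3124 (n : nat) : {set 'S_n} :=
  [set s : 'S_n | [&& fishburn s, avoids s pat321, avoids s pat2143 & avoids s pat3124]].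

From mathcomp Require Import all_boot all_fingroup zify.
Set Implicit Arguments. Unset Strict Implicit. Unset Printing Implicit Defensive.

(* Positions and values are 0-based.  For a < b < n let sigma a b be the
   permutation whose one-line notation is
       0 .. a-1,  b,  a,  b+1 .. n-1,  a+1 .. b-1.
   The set F_n(321, 2143, 3124) consists of the identity and of the
   C(n, 2) distinct permutations sigma a b, whence the formula.

   - sigma a b is split into five blocks of positions (the fixed prefix, the
     singletons a and a+1, and two increasing runs); whether a pair of
     positions is an inversion depends only on their blocks, so pattern
     avoidance of sigma a b reduces to a check on block indices, and the
     Fishburn property is a direct computation (sigma_in).
   - Conversely, let s != 1 be in the set and a its first moved point.  The
     Fishburn condition forces a descent at a, 321-avoidance then forces
     s (a+1) = a, and the three patterns force the remaining values to form
     an increasing run above s a followed by an increasing run below it.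
     Equivalently, i |-> (position of s i in sigma a (s a)) is strictly
     increasing, hence the identity, so s = sigma a (s a) (perm_is_sigma).
   - Counting pairs a < b finishes the proof. *)

Lemma containsP n k (s : 'S_n) (p : 'S_k) :
  reflect (exists f : 'I_k -> 'I_n, {homo f : a b / a < b} /\
             forall a b, (s (f a) < s (f b)) = (p a < p b))
          (contains_pattern s p).
Proof.
apply: (iffP existsP) => [[f /forallP occ] | [f [incr iso]]].
- exists f; split=> [a b | a b].
  + by have /forallP/(_ b)/andP[/implyP] := occ a.
  + by have /forallP/(_ b)/andP[_ /eqP] := occ a.
- exists (finfun f); apply/forallP => a; apply/forallP => b.
  by rewrite !ffunE iso eqxx andbT; apply/implyP/incr.
Qed.

Lemma contains321 n (s : 'S_n) : contains_pattern s pat321 <->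
  exists x0 x1 x2 : 'I_n, [/\ x0 < x1, x1 < x2, s x2 < s x1 & s x1 < s x0].
Proof.
split.
- case/containsP => f [incr iso].
  exists (f (@Ordinal 3 0 isT)), (f (@Ordinal 3 1 isT)), (f (@Ordinal 3 2 isT)).
  by rewrite !iso /pat321 !permE; split=> //; apply: incr.
- case=> x0 [x1 [x2 [h01 h12 v21 v10]]]; apply/containsP.
  exists (fun i : 'I_3 => nth x0 [:: x0; x1; x2] i); split.
  + by move=> [[|[|[|a]]] ?] [[|[|[|b]]] ?] //= _; lia.
  + by move=> [[|[|[|a]]] ?] [[|[|[|b]]] ?] //=; rewrite /pat321 !permE /=; lia.
Qed.

Lemma contains2143 n (s : 'S_n) : contains_pattern s pat2143 <->
  exists x0 x1 x2 x3 : 'I_n, [/\ x0 < x1, x1 < x2, x2 < x3 &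
     [/\ s x1 < s x0, s x0 < s x3 & s x3 < s x2]].
Proof.
split.
- case/containsP => f [incr iso].
  exists (f (@Ordinal 4 0 isT)), (f (@Ordinal 4 1 isT)), (f (@Ordinal 4 2 isT)),
    (f (@Ordinal 4 3 isT)).
  by rewrite !iso /pat2143 !permE /perm_of_seq /= !inordK //; split=> //; apply: incr.
- case=> x0 [x1 [x2 [x3 [h01 h12 h23 [v10 v03 v32]]]]]; apply/containsP.
  exists (fun i : 'I_4 => nth x0 [:: x0; x1; x2; x3] i); split.
  + by move=> [[|[|[|[|a]]]] ?] [[|[|[|[|b]]]] ?] //= _; lia.
  + move=> [[|[|[|[|a]]]] ?] [[|[|[|[|b]]]] ?] //=;
      by rewrite /pat2143 !permE /perm_of_seq /= !inordK //=; lia.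
Qed.

Lemma contains3124 n (s : 'S_n) : contains_pattern s pat3124 <->
  exists x0 x1 x2 x3 : 'I_n, [/\ x0 < x1, x1 < x2, x2 < x3 &
     [/\ s x1 < s x2, s x2 < s x0 & s x0 < s x3]].
Proof.
split.
- case/containsP => f [incr iso].
  exists (f (@Ordinal 4 0 isT)), (f (@Ordinal 4 1 isT)), (f (@Ordinal 4 2 isT)),
    (f (@Ordinal 4 3 isT)).
  by rewrite !iso /pat3124 !permE /perm_of_seq /= !inordK //; split=> //; apply: incr.
- case=> x0 [x1 [x2 [x3 [h01 h12 h23 [v12 v20 v03]]]]]; apply/containsP.
  exists (fun i : 'I_4 => nth x0 [:: x0; x1; x2; x3] i); split.
  + by move=> [[|[|[|[|a]]]] ?] [[|[|[|[|b]]]] ?] //= _; lia.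
  + move=> [[|[|[|[|a]]]] ?] [[|[|[|[|b]]]] ?] //=;
      by rewrite /pat3124 !permE /perm_of_seq /= !inordK //=; lia.
Qed.

Lemma perm_val_inj n (s : 'S_n) (i j : 'I_n) : s i = s j :> nat -> i = j :> nat.
Proof. by move/ord_inj/perm_inj ->. Qed.

Lemma homo_ord_id n (f : 'I_n -> 'I_n) : {homo f : i j / i < j} -> forall i, f i = i.
Proof.
move=> incr.
have ge_id k (i : 'I_n) : i = k :> nat -> k <= f i.
  elim: k i => [//|k IH] i ik; have kn : k < n by rewrite -ik ltnW.
  by have := incr (Ordinal kn) i; rewrite ik => /(_ (ltnSn k)); have := IH (Ordinal kn) erefl; lia.
have le_id k (i : 'I_n) : i + k = n.-1 -> f i + k <= n.-1.
  elim: k i => [|k IH] i ik; first by have := ltn_ord (f i); lia.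
  have i1n : i.+1 < n by have := ltn_ord i; lia.
  have := incr i (Ordinal i1n) (ltnSn i); have := IH (Ordinal i1n); rewrite /=; lia.
move=> i; apply: ord_inj; have := ge_id _ i erefl; have := le_id (n.-1 - i) i.
by have := ltn_ord i; lia.
Qed.

Ltac case_ifs :=
  repeat match goal with |- context [if ?c then _ else _] => case: (boolP c) => ? end.

(* Block indices c <= d of two positions in increasing order; the blocks 1
   and 2 are singletons. *)
Definition block_step (c d : nat) : Prop :=
  c <= d < 5 /\ (c = d -> c <> 1 /\ c <> 2).

(* The pairs of blocks whose positions form an inversion of sigma a b. *)
Definition inverted (c d : nat) : bool :=
  [|| (c == 1) && (d == 2), (c == 1) && (d == 4) | (c == 3) && (d == 4)].

Lemma invertedP c d : inverted c d ->
  [\/ c = 1 /\ d = 2, c = 1 /\ d = 4 | c = 3 /\ d = 4].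
Proof. by case/or3P => /andP[/eqP-> /eqP->]; [constructor 1|constructor 2|constructor 3]. Qed.

Lemma no321_blocks c0 c1 c2 : block_step c0 c1 -> block_step c1 c2 ->
  inverted c0 c1 -> inverted c1 c2 -> False.
Proof. rewrite /block_step /inverted; lia. Qed.

Lemma no2143_blocks c0 c1 c2 c3 :
  block_step c0 c1 -> block_step c1 c2 -> block_step c2 c3 ->
  inverted c0 c1 -> inverted c2 c3 -> ~~ inverted c0 c3 -> False.
Proof.
move=> + + + /invertedP[] [? ?] /invertedP[] [? ?]; subst; rewrite /block_step /inverted; lia.
Qed.

Lemma no3124_blocks c0 c1 c2 c3 :
  block_step c0 c1 -> block_step c1 c2 -> block_step c2 c3 ->
  inverted c0 c1 -> inverted c0 c2 -> ~~ inverted c0 c3 -> False.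
Proof.
move=> + + + /invertedP[] [? ?]; subst; rewrite /block_step /inverted; lia.
Qed.

(* sval: the one-line notation of sigma a b; spos: its inverse (the position
   of a value); block: the index of the block containing a position. *)
Section Blocks.
Variables n a b : nat.
Hypotheses (lt_ab : a < b) (lt_bn : b < n).

Definition sval (i : nat) : nat :=
  if i < a then i else if i == a then b else if i == a.+1 then a
  else if i <= n + a - b then i + b - a - 1 else i + b - n.

Definition spos (v : nat) : nat :=
  if v < a then v else if v == a then a.+1 else if v < b then v + n - b
  else if v == b then a else v - b + a + 1.

Definition block (i : nat) : nat :=
  if i < a then 0 else if i == a then 1 else if i == a.+1 then 2
  else if i <= n + a - b then 3 else 4.

Lemma sval_lt i : i < n -> sval i < n.
Proof. rewrite /sval; case_ifs; lia. Qed.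

Lemma sval_inj i j : i < n -> j < n -> sval i = sval j -> i = j.
Proof. rewrite /sval; case_ifs; lia. Qed.

Lemma spos_lt v : v < n -> spos v < n.
Proof. rewrite /spos; case_ifs; lia. Qed.

Lemma svalK v : v < n -> sval (spos v) = v.
Proof. rewrite /spos; case_ifs; rewrite /sval; case_ifs; lia. Qed.

Lemma blocks_compare i j : i < j -> j < n ->
  block_step (block i) (block j) /\ (sval j < sval i) = inverted (block i) (block j).
Proof. rewrite /block_step /block /sval /inverted; case_ifs; lia. Qed.

Lemma sval_fishburn i j : i < j -> j < n -> i.+1 < n ->
  sval j < sval i -> sval i < sval i.+1 -> sval i = (sval j).+1 -> False.
Proof. rewrite /sval; case_ifs; lia. Qed.

End Blocks.

(* sval packaged as a permutation of 'I_n; for a >= b the identity is used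
   instead, so that sigma is total. *)
Definition sigma_fun n (a b : 'I_n) (i : 'I_n) : nat := if a < b then sval n a b i else i.

Lemma sigma_fun_lt n (a b i : 'I_n) : sigma_fun a b i < n.
Proof. by rewrite /sigma_fun; case: ifP => // ab; apply: sval_lt. Qed.

Definition sigma_ord n (a b i : 'I_n) : 'I_n := Ordinal (sigma_fun_lt a b i).

Lemma sigma_ord_inj n (a b : 'I_n) : injective (sigma_ord a b).
Proof.
move=> i j /(congr1 val); rewrite /= /sigma_fun => eq_ij; apply: val_inj.
by case: ifP eq_ij => // ab; apply: sval_inj.
Qed.

Definition sigma n (a b : 'I_n) : 'S_n := perm (@sigma_ord_inj n a b).

Lemma sigmaE n (a b i : 'I_n) : a < b -> sigma a b i = sval n a b i :> nat.
Proof. by move=> ab; rewrite permE /= /sigma_fun ab. Qed.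

(* sigma a b is determined by a (its first moved point) and b (the value
   there); in particular it is not the identity. *)
Lemma sigma_at_a n (a b : 'I_n) : a < b -> sigma a b a = b.
Proof. by move=> ab; apply: ord_inj; rewrite sigmaE // /sval ltnn eqxx. Qed.

Lemma sigma_below n (a b i : 'I_n) : a < b -> i < a -> sigma a b i = i.
Proof. by move=> ab ia; apply: ord_inj; rewrite sigmaE // /sval ia. Qed.

Lemma sigma_neq1 n (a b : 'I_n) : a < b -> sigma a b != 1%g.
Proof.
by move=> ab; apply/eqP => e; move: (sigma_at_a ab); rewrite e perm1 => ba; rewrite ba ltnn in ab.
Qed.

Lemma sigma_injective n (a b a' b' : 'I_n) : a < b -> a' < b' ->
  sigma a b = sigma a' b' -> a = a' /\ b = b'.
Proof.
move=> ab ab' e; have a_eq : a = a'.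
  case: (ltngtP a a') => [lt | lt | /ord_inj //].
  - by move: (sigma_below ab' lt); rewrite -e sigma_at_a // => ba; rewrite ba ltnn in ab.
  - by move: (sigma_below ab lt); rewrite e sigma_at_a // => ba; rewrite ba ltnn in ab'.
by subst a'; split => //; rewrite -(sigma_at_a ab) e sigma_at_a.
Qed.

Lemma identity_in n : (1%g : 'S_n) \in F_321_2143_3124 n.
Proof.
rewrite inE /avoids; apply/and4P; split.
- apply/forallP => i; apply/forallP => j; apply/forallP => i1.
  by apply/negP => /and5P[ij _ vji _ _]; rewrite !perm1 in vji; lia.
- by apply/negP => /contains321[x0 [x1 [x2 [h01 _ _ v10]]]]; rewrite !perm1 in v10; lia.
- apply/negP => /contains2143[x0 [x1 [x2 [x3 [h01 _ _ [v10 _ _]]]]]].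
  by rewrite !perm1 in v10; lia.
- apply/negP => /contains3124[x0 [x1 [x2 [x3 [h01 h12 _ [_ v20 _]]]]]].
  by rewrite !perm1 in v20; lia.
Qed.

Lemma sigma_in n (a b : 'I_n) : a < b -> sigma a b \in F_321_2143_3124 n.
Proof.
move=> ab; have bn := ltn_ord b.
have cmp (i j : 'I_n) : i < j -> block_step (block n a b i) (block n a b j) /\
    (sigma a b j < sigma a b i) = inverted (block n a b i) (block n a b j).
  by move=> ij; rewrite !sigmaE //; apply: blocks_compare.
rewrite inE /avoids; apply/and4P; split.
- apply/forallP => i; apply/forallP => j; apply/forallP => i1.
  apply/negP => /and5P[ij /eqP i1E vji vii1 /eqP vij].
  have {}i1E : i1 = i.+1 :> nat := i1E.
  have {}vij : sigma a b i = (sigma a b j).+1 :> nat := vij.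
  move: vji vii1 vij; rewrite !sigmaE // i1E; apply: (sval_fishburn ab bn ij (ltn_ord j)).
  by rewrite -i1E.
- apply/negP => /contains321[x0 [x1 [x2 [h01 h12 v21 v10]]]].
  have [s01 i01] := cmp _ _ h01; have [s12 i12] := cmp _ _ h12.
  by apply: (no321_blocks s01 s12); rewrite -?i01 -?i12.
- apply/negP => /contains2143[x0 [x1 [x2 [x3 [h01 h12 h23 [v10 v03 v32]]]]]].
  have [s01 i01] := cmp _ _ h01; have [s12 _] := cmp _ _ h12.
  have [s23 i23] := cmp _ _ h23; have [_ i03] := cmp _ _ (ltn_trans h01 (ltn_trans h12 h23)).
  apply: (no2143_blocks s01 s12 s23); rewrite -?i01 -?i23 //.
  by rewrite -i03 -leqNgt ltnW.
- apply/negP => /contains3124[x0 [x1 [x2 [x3 [h01 h12 h23 [v12 v20 v03]]]]]].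
  have [s01 i01] := cmp _ _ h01; have [s12 _] := cmp _ _ h12; have [s23 _] := cmp _ _ h23.
  have [_ i02] := cmp _ _ (ltn_trans h01 h12).
  have [_ i03] := cmp _ _ (ltn_trans h01 (ltn_trans h12 h23)).
  apply: (no3124_blocks s01 s12 s23); rewrite -?i01 -?i02 //; last first.
    by rewrite -i03 -leqNgt ltnW.
  exact: ltn_trans v12 v20.
Qed.

Section FirstMovedPoint.
Variables (n : nat) (s : 'S_n) (a : 'I_n).
Hypotheses (s_fish : fishburn s) (s321 : avoids s pat321)
  (s2143 : avoids s pat2143) (s3124 : avoids s pat3124).
Hypotheses (moved_a : s a != a) (fixed_below : forall i : 'I_n, i < a -> s i = i :> nat).

Lemma fixed_value (i : 'I_n) : s i < a -> s i = i.
Proof. by move=> lt; apply/perm_inj/ord_inj; apply: fixed_below. Qed.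

Lemma value_ge (i : 'I_n) : a <= i -> a <= s i.
Proof. by move=> ai; case: (ltnP (s i) a) => // /[dup] lt /fixed_value e; rewrite e in lt; lia. Qed.

Lemma lt_a_sa : a < s a.
Proof. by rewrite ltn_neqAle value_ge // andbT eq_sym. Qed.

(* An ascent at a would make (a, a+1, position of s a - 1) a Fishburn pattern. *)
Lemma descent_at_a (i1 : 'I_n) : i1 = a.+1 :> nat -> s i1 < s a.
Proof.
move=> i1E; have i1a : i1 != a by apply/eqP => e; move: i1E; rewrite e; lia.
case: ltngtP => // [lt_sa_si1 | /ord_inj/perm_inj e]; last by rewrite e eqxx in i1a.
have pred_lt : (s a).-1 < n by have := ltn_ord (s a); lia.
pose j := (s^-1)%g (Ordinal pred_lt); have sj : s j = (s a).-1 :> nat by rewrite permKV.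
have aj : a < j.
  case: (ltngtP a j) => [// | ja | /ord_inj ja].
  - by have := fixed_below ja; have := lt_a_sa; lia.
  - by move: sj; rewrite -ja; have := lt_a_sa; lia.
exfalso; move: s_fish => /forallP /(_ a) /forallP /(_ j) /forallP /(_ i1) /negP.
apply; apply/and5P; split=> //; first exact/eqP.
- by rewrite sj; have := lt_a_sa; lia.
- by apply/eqP; change ((s a : nat) = (s j).+1); rewrite sj; have := lt_a_sa; lia.
Qed.

(* The value a sits at position a+1, otherwise s a, s (a+1), a is a 321. *)
Lemma pos_of_a : (s^-1)%g a = a.+1 :> nat.
Proof.
set q := (s^-1)%g a; have sq : s q = a by rewrite permKV.
have aq : a < q.
  case: (ltngtP a q) => [// | qa | /ord_inj aq].
  - by have := fixed_below qa; rewrite sq; lia.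
  - by move: moved_a; rewrite {1}aq sq eqxx.
case: (ltngtP q a.+1) => [| a1q |] //; first by lia.
have a1n : a.+1 < n by have := ltn_ord q; lia.
pose a1 : 'I_n := Ordinal a1n.
have a1_desc : s a1 < s a by apply: descent_at_a.
have a1_gt : a < s a1.
  rewrite ltn_neqAle value_ge ?andbT ?leqnSn //=.
  by apply/eqP => e; have := @perm_val_inj n s q a1; rewrite sq -e /= => /(_ erefl); lia.
by move: s321 => /negP; case; apply/contains321; exists a, a1, q; rewrite sq /=; split => //; lia.
Qed.

Lemma tail_value (i : 'I_n) : a.+1 < i -> a < s i /\ s i != s a :> nat.
Proof.
move=> ai; have := @perm_val_inj n s i ((s^-1)%g a); rewrite permKV.
have := pos_of_a; have := @perm_val_inj n s i a; have := value_ge (ltnW (ltnW ai)); lia.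
Qed.

(* After position a+1 the values below s a increase (321), the values above
   s a increase (2143 with s a, a), and no value above s a follows one below
   it (3124 with s a, a). *)
Lemma tail_low_increasing (i j : 'I_n) : a.+1 < i -> i < j ->
  s i < s a -> s j < s a -> s i < s j.
Proof.
move=> ai ij vi vj; case: (ltngtP (s i) (s j)) => // [vji | /perm_val_inj]; last by lia.
by move: s321 => /negP; case; apply/contains321; exists a, i, j; split => //; lia.
Qed.

Lemma tail_high_increasing (i j : 'I_n) : a.+1 < i -> i < j ->
  s a < s i -> s a < s j -> s i < s j.
Proof.
move=> ai ij vi vj; case: (ltngtP (s i) (s j)) => // [vji | /perm_val_inj]; last by lia.
move: s2143 => /negP; case; apply/contains2143.
exists a, ((s^-1)%g a), i, j; rewrite permKV pos_of_a; split => //; try lia.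
by split=> //; apply: lt_a_sa.
Qed.

Lemma tail_low_before_high (i j : 'I_n) : a.+1 < i -> i < j -> s i < s a -> s j < s a.
Proof.
move=> ai ij vi; have [gt_j ne_j] := tail_value (ltn_trans ai ij).
case: (ltngtP (s j) (s a)) => // [vj | /eqP]; last by rewrite (negbTE ne_j).
have [gt_i _] := tail_value ai.
move: s3124 => /negP; case; apply/contains3124.
by exists a, ((s^-1)%g a), i, j; rewrite permKV pos_of_a; split => //; lia.
Qed.

Definition key (i : 'I_n) : nat := spos n a (s a) (s i).

Lemma key_below (i : 'I_n) : i < a -> key i = i.
Proof. by move=> ia; rewrite /key /spos fixed_below ia. Qed.

Lemma key_at_a : key a = a.
Proof. by have := lt_a_sa; rewrite /key /spos; case_ifs; lia. Qed.

Lemma key_at_a1 (i : 'I_n) : i = a.+1 :> nat -> key i = a.+1.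
Proof.
move=> ia1; have -> : i = (s^-1)%g a by apply: ord_inj; rewrite pos_of_a.
by rewrite /key permKV /spos ltnn eqxx.
Qed.

Lemma key_above_a (i : 'I_n) : a < i -> a < key i.
Proof.
move=> ai; have := value_ge (ltnW ai); have := @perm_val_inj n s i a.
have := ltn_ord (s a); rewrite /key /spos; case_ifs; lia.
Qed.

Lemma key_tail (i : 'I_n) : a.+1 < i -> a.+1 < key i.
Proof.
move=> ai; have := tail_value ai; have := ltn_ord (s a).
rewrite /key /spos; case_ifs; lia.
Qed.

Lemma key_tail_increasing (i j : 'I_n) : a.+1 < i -> i < j -> key i < key j.
Proof.
move=> ai ij; have := tail_value ai; have := tail_value (ltn_trans ai ij).
have := @tail_low_increasing i j ai ij; have := @tail_high_increasing i j ai ij.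
have := @tail_low_before_high i j ai ij.
have := ltn_ord (s i); have := ltn_ord (s j); have := ltn_ord (s a).
rewrite /key /spos; case_ifs; lia.
Qed.

Lemma key_increasing (i j : 'I_n) : i < j -> key i < key j.
Proof.
move=> ij; have := @key_below i; have := @key_below j; have := @key_above_a j.
have : j = a :> nat -> key j = a by move/ord_inj ->; apply: key_at_a.
have := @key_at_a1 i; have := @key_tail j; have := @key_tail_increasing i j.
move: ij; case: (ltngtP i a) => [| | /ord_inj ->]; [lia | lia | rewrite key_at_a; lia].
Qed.

Lemma perm_is_sigma : s = sigma a (s a).
Proof.
have lt_sa := lt_a_sa; have sa_n := ltn_ord (s a).
pose k (i : 'I_n) : 'I_n := Ordinal (spos_lt lt_sa sa_n (ltn_ord (s i))).
have k_id : forall i, k i = i by apply: homo_ord_id => i j; apply: key_increasing.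
apply/permP => i; apply: ord_inj; rewrite sigmaE //.
by rewrite -(svalK lt_sa sa_n (ltn_ord (s i))) -[spos _ _ _ _]/(k i : nat) k_id.
Qed.

End FirstMovedPoint.

Lemma nonidentity_is_sigma n (s : 'S_n) :
  s \in F_321_2143_3124 n -> s != 1%g -> exists a b : 'I_n, a < b /\ s = sigma a b.
Proof.
rewrite inE => /and4P[fish s321 s2143 s3124] s_ne1.
have [i0 moved_i0] : exists i0 : 'I_n, s i0 != i0.
  apply/existsP; apply: contraR s_ne1 => /existsPn fixed; apply/eqP/permP => i.
  by rewrite perm1; apply/eqP; move: (fixed i); rewrite negbK.
case: (@arg_minnP _ i0 (fun i => s i != i) (@nat_of_ord n) moved_i0) => a moved_a a_min.
have fixed_below (i : 'I_n) : i < a -> s i = i :> nat.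
  by move=> ia; apply/eqP; apply: contraTT ia => moved_i; rewrite -leqNgt; apply: a_min.
exists a, (s a); split; first exact: lt_a_sa moved_a fixed_below.
exact: perm_is_sigma fish s321 s2143 s3124 moved_a fixed_below.
Qed.

Lemma card_ord_lt n (j : 'I_n) : #|[set i : 'I_n | i < j]| = j.
Proof.
have le_jn := ltnW (ltn_ord j).
have widen_inj : injective (widen_ord le_jn) by move=> x y [] /ord_inj.
rewrite -{2}(card_ord j) -cardsT -(card_imset _ widen_inj).
apply: eq_card => i; rewrite inE; apply/idP/imsetP => [ij | [k _ ->]].
- by exists (Ordinal ij) => //; apply: val_inj.
- exact: (ltn_ord k).
Qed.

Lemma card_increasing_pairs n : #|[set p : 'I_n * 'I_n | p.1 < p.2]| = 'C(n, 2).
Proof.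
rewrite -bin2_sum big_mkord -sum1_card (partition_big snd xpredT) //=.
apply: eq_bigr => j _; rewrite -[in RHS](card_ord_lt j) -sum1_card.
rewrite (reindex (fun i : 'I_n => (i, j))) /=.
- by apply: eq_bigl => i; rewrite !inE eqxx andbT.
- by exists fst => [i _ | [i k] /andP[_ /eqP /= ->]].
Qed.

Theorem mainTheorem11 (n : nat) : #|F_321_2143_3124 n| = 'C(n, 2) + 1.
Proof.
pose P := [set p : 'I_n * 'I_n | p.1 < p.2].
have F_eq : F_321_2143_3124 n = 1%g |: [set sigma p.1 p.2 | p in P].
  apply/setP => s; rewrite in_setU1; have [-> | s_ne1] /= := eqVneq s 1%g.
    exact: identity_in.
  apply/idP/imsetP => [/nonidentity_is_sigma/(_ s_ne1) [a [b [ab ->]]] | [p]].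
  - by exists (a, b); rewrite ?inE.
  - by rewrite inE => p12 ->; apply: sigma_in.
rewrite F_eq cardsU1 card_in_imset ?card_increasing_pairs.
- rewrite addnC; congr (_ + _); apply/eqP; rewrite eqb1.
  by apply/imsetP => -[p]; rewrite inE => p12 /esym/eqP; apply/negP/sigma_neq1.
- move=> [a b] [a' b']; rewrite !inE /= => ab ab'.
  by move/(sigma_injective ab ab') => [-> ->].
Qed.
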